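(* Let $l\ge1$ and let $(X_l,M_l),\dots,(X_1,M_1)$ be transformation monoids. Then the wreath product monoid $M_l\circ\cdots\circ M_1$ embeds (as a monoid) in $\mathrm{Ell}(r_0,T(|X_l|,\dots,|X_1|))$.
   Context: A transformation monoid $(X,M)$ is a nonempty set $X$ with a submonoid $M$ of the monoid of all full transformations of $X$ (maps written on the right). For $X=X_l\times\cdots\times X_1$ and $i\le l$, $\pi_i$ is the projection onto $X_i$. A full transformation $\varphi$ of $X$ is sequential if for every $i$, elements with the same last $i$ components have images with the same last $i$ components. Given $(a_{i-1},\dots,a_1)$, the local map $(\cdot,a_{i-1},\dots,a_1)\varphi\pi_i:X_i\to X_i$ sends $x$ to the $i$-th component of $(\dots,x,a_{i-1},\dots,a_1)\varphi$ (well defined by sequentiality). The wreath product $M_l\circ\cdots\circ M_1$ is the monoid of all sequential $\varphi$ with $\varphi\pi_1$ (as a map on $X_1$) in $M_1$ and every local map $(\cdot,a_{i-1},\dots,a_1)\varphi\pi_i$ in $M_i$. $\mathrm{Ell}(r_0,T)$ is the monoid of depth-preserving, distance-non-increasing self-maps of the vertex set of the rooted tree $(r_0,T)$ (depth = distance to $r_0$). $T(n_l,\dots,n_1)$ is the rooted tree of depth $l$ in which each vertex of depth $i-1$ has exactly $n_i$ sons. *)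

From mathcomp Require Import all_boot.
Set Implicit Arguments. Unset Strict Implicit. Unset Printing Implicit Defensive.

Definition is_tmonoid (Y : Type) (M : (Y -> Y) -> Prop) : Prop :=
  M id /\ (forall f g, M f -> M g -> M (f \o g)).

(* Component i : 'I_l (0-based) is the factor X_{i+1}; "the last k
   components" are the components with index < k. *)
Definition point (l : nat) (X : 'I_l -> Type) : Type := forall i : 'I_l, X i.

Definition sequential (l : nat) (X : 'I_l -> Type)
    (phi : point X -> point X) : Prop :=
  forall (i : 'I_l) (x y : point X),
    (forall j : 'I_l, j <= i -> x j = y j) ->
    forall j : 'I_l, j <= i -> phi x j = phi y j.

(* Wreath product M_l o ... o M_1: sequential phi all of whose local maps
   (., a_{i-1}, ..., a_1) phi pi_i lie in M_i.  The local map at level i with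
   lower coordinates those of z is the map m with phi(y)_i = m(y_i) for all y
   agreeing with z below i. *)
Definition in_wreath (l : nat) (X : 'I_l -> Type)
    (M : forall i : 'I_l, (X i -> X i) -> Prop)
    (phi : point X -> point X) : Prop :=
  sequential phi /\
  forall (i : 'I_l) (z : point X),
    exists2 m : X i -> X i, M i m &
      forall y : point X, (forall j : 'I_l, j < i -> y j = z j) ->
        phi y i = m (y i).

Section Trees.
Variables (V : Type) (par : V -> option V) (r0 : V).

Definition pdepth (v : V) (n : nat) : Prop :=
  iter n (fun o => obind par o) (Some v) = Some r0.

Definition adj (u v : V) : Prop := par u = Some v \/ par v = Some u.

Inductive walk : V -> V -> nat -> Prop :=
  | walk0 v : walk v v 0
  | walkS u w v n : adj u w -> walk w v n -> walk u v n.+1.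

Definition dist_le (u v : V) (n : nat) : Prop :=
  exists2 m, m <= n & walk u v m.

(* Ell(r0,T): depth-preserving, distance-non-increasing self maps. *)
Definition in_Ell (f : V -> V) : Prop :=
  (forall v n, dist_le v r0 n <-> dist_le (f v) r0 n) /\
  (forall u v n, dist_le u v n -> dist_le (f u) (f v) n).
End Trees.

(* (V, par, r0) is a rooted tree isomorphic to T(|X_l|, ..., |X_1|):
   r0 is the root, every vertex has a finite depth, every vertex of depth i-1
   (i = 1..l) has a set of sons in bijection with X_i, and vertices of depth
   l have no sons. *)
Definition is_T_tree (V : Type) (par : V -> option V) (r0 : V)
    (l : nat) (X : 'I_l -> Type) : Prop :=
  [/\ par r0 = None,
      (forall v, exists n, pdepth par r0 v n),
      (forall (i : 'I_l) (v : V), pdepth par r0 v i ->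
          exists f : X i -> {w : V | par w = Some v}, bijective f)
    & (forall v w, pdepth par r0 v l -> par w <> Some v)].

From mathcomp Require Import all_boot.
From Stdlib Require Import Classical ClassicalEpsilon FunctionalExtensionality ProofIrrelevance.
Set Implicit Arguments. Unset Strict Implicit. Unset Printing Implicit Defensive.

(* Label, once and for all, the sons of every vertex of depth i by the elements
   of X_(i+1).  A point x = (x_l, ..., x_1) and a length d <= l then determine
   the vertex [path_vertex x d] of depth d reached from the root by following
   the labels x_1, ..., x_d; every vertex arises this way, and two such
   vertices of depth d coincide iff the points agree on their last d
   coordinates.  A sequential map phi therefore induces a well defined map
   [tree_map phi] sending [path_vertex x d] to [path_vertex (phi x) d].  It
   preserves depths and the father relation, hence walks, hence (tree
   distances being realized by walks) it lies in Ell.  The assignment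
   phi |-> tree_map phi is multiplicative and sends id to id, and it is
   injective because phi x is read off from the image of the leaf
   [path_vertex x l]. *)

Section TreeDepth.
Variables (V : Type) (par : V -> option V) (r0 : V).
Hypothesis par_r0 : par r0 = None.

Lemma iter_obind_None k : iter k (fun o => obind par o) None = None.
Proof. by elim: k => //= k ->. Qed.

Lemma pdepth_son u w n : par u = Some w -> pdepth par r0 w n -> pdepth par r0 u n.+1.
Proof. by rewrite /pdepth iterSr /= => ->. Qed.

(* The depth of a vertex is unique, since the root has no father. *)
Lemma pdepth_uniq v n m : pdepth par r0 v n -> pdepth par r0 v m -> n = m.
Proof.
wlog le_nm : n m / n <= m.
  move=> sym Hn Hm; case: (leqP n m) => [le_nm | /ltnW le_mn]; first exact: sym.
  exact/esym/sym.
move=> Hn Hm; case: (ltngtP n m) le_nm => // lt_nm _.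
move: Hm; rewrite /pdepth -(subnK (ltnW lt_nm)) iterD Hn.
have : 0 < m - n by rewrite subn_gt0.
by case: (m - n) => [|k] // _; rewrite iterSr /= par_r0 iter_obind_None.
Qed.

Lemma walk_to_root v n : pdepth par r0 v n -> walk par v r0 n.
Proof.
elim: n v => [|n IH] v; first by rewrite /pdepth /= => -[->]; constructor.
rewrite /pdepth iterSr /=; case Ev: (par v) => [w|]; last by rewrite iter_obind_None.
by move=> Hw; apply: (@walkS _ _ v w); [left | exact: IH].
Qed.

Hypothesis pdepth_ex : forall v, exists n, pdepth par r0 v n.

(* Each edge changes the depth by one, so a walk of length m from u to w
   bounds the depth of u by the depth of w plus m. *)
Lemma walk_depth_le u w m : walk par u w m ->
  forall a b, pdepth par r0 u a -> pdepth par r0 w b -> a <= b + m.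
Proof.
elim => [v|u' w' v n Hadj _ IH] a b Ha Hb; first by rewrite (pdepth_uniq Ha Hb) addn0.
have [c Hc] := pdepth_ex w'.
have := IH _ _ Hc Hb; rewrite addnS.
case: Hadj => E; first by rewrite (pdepth_uniq Ha (pdepth_son E Hc)).
rewrite -(pdepth_uniq (pdepth_son E Ha) Hc) => le_ab.
exact: leq_trans (leqnSn _) (leq_trans le_ab (leqnSn _)).
Qed.

Lemma dist_root_le v a n : pdepth par r0 v a -> dist_le par v r0 n <-> a <= n.
Proof.
move=> Ha; split => [[m le_mn W] | le_an]; last by exists a => //; apply: walk_to_root.
have := walk_depth_le W Ha (erefl : pdepth par r0 r0 0).
by rewrite add0n => le_am; apply: leq_trans le_mn.
Qed.

End TreeDepth.

Definition labels_sons (V : Type) (par : V -> option V) (v : V) (A : Type)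
    (g : A -> V) : Prop :=
  [/\ forall a, par (g a) = Some v, injective g
    & forall w, par w = Some v -> exists a, g a = w].

Definition son_labelling (l : nat) (X : 'I_l -> Type) (V : Type)
    (par : V -> option V) (r0 : V) (G : forall i : 'I_l, V -> X i -> V) : Prop :=
  forall (i : 'I_l) v, pdepth par r0 v i -> labels_sons par v (G i v).

Lemma son_labelling_ex (l : nat) (X : 'I_l -> Type) (V : Type)
    (par : V -> option V) (r0 : V) : is_T_tree par r0 X ->
  exists G, @son_labelling l X V par r0 G.
Proof.
case=> _ _ sons _.
have labelling_at (i : 'I_l) v :
    exists g : X i -> V, pdepth par r0 v i -> labels_sons par v g.
  have [Hv|Hnot] := classic (pdepth par r0 v i); last by exists (fun=> v) => /Hnot.
  have [f [f' fK f'K]] := sons i v Hv.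
  exists (fun a => proj1_sig (f a)) => _; split.
  - by move=> a; case: (f a).
  - move=> a b E; apply: (can_inj fK).
    move: (f a) (f b) E => [w p] [w' q] /= E; subst w'.
    by rewrite (proof_irrelevance _ p q).
  - by move=> w Hw; exists (f' (exist _ w Hw)); rewrite f'K.
exists (fun i v => proj1_sig (constructive_indefinite_description _ (labelling_at i v))).
by move=> i v; exact: (proj2_sig (constructive_indefinite_description _ (labelling_at i v))).
Qed.

Lemma sequential_comp (l : nat) (X : 'I_l -> Type) (phi psi : point X -> point X) :
  sequential phi -> sequential psi -> sequential (psi \o phi).
Proof.
move=> seq_phi seq_psi i a b agree j le_ji.
by apply: seq_psi le_ji => k /(seq_phi i a b agree).
Qed.

Section TreeMap.
Variables (l : nat) (X : 'I_l -> Type) (V : Type) (par : V -> option V) (r0 : V).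
Hypotheses (par_r0 : par r0 = None) (pdepth_ex : forall v, exists n, pdepth par r0 v n).
Hypothesis leaf_no_son : forall v w, pdepth par r0 v l -> par w <> Some v.
Variable G : forall i : 'I_l, V -> X i -> V.
Arguments G : clear implicits.
Hypothesis G_sons : son_labelling par r0 G.

Fixpoint path_vertex (x : point X) (d : nat) : V :=
  if d is d'.+1 then
    if (insub d' : option 'I_l) is Some i then G i (path_vertex x d') (x i)
    else path_vertex x d'
  else r0.

Lemma path_vertexS x (i : 'I_l) : path_vertex x i.+1 = G i (path_vertex x i) (x i).
Proof. by rewrite /= valK. Qed.

Lemma path_vertex_depth x d : d <= l -> pdepth par r0 (path_vertex x d) d.
Proof.
elim: d => [|d IH] lt_dl //.
rewrite (path_vertexS x (Ordinal lt_dl)).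
have [son_G _ _] := G_sons (i := Ordinal lt_dl) (IH (ltnW lt_dl)).
exact: pdepth_son (son_G _) (IH (ltnW lt_dl)).
Qed.

Lemma path_vertex_father x (i : 'I_l) :
  par (path_vertex x i.+1) = Some (path_vertex x i).
Proof.
have [son_G _ _] := G_sons (i := i) (path_vertex_depth x (ltnW (ltn_ord i))).
by rewrite path_vertexS son_G.
Qed.

Lemma path_vertex_prefix x y d : (forall j : 'I_l, j < d -> x j = y j) ->
  path_vertex x d = path_vertex y d.
Proof.
elim: d => [|d IH] agree //=.
rewrite IH => [|j lt_jd]; last exact/agree/ltnW.
by case: insubP => [i _ val_i|] //; rewrite agree // val_i.
Qed.

Lemma path_vertex_inj x y d : d <= l -> path_vertex x d = path_vertex y d ->
  forall j : 'I_l, j < d -> x j = y j.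
Proof.
elim: d => [|d IH] lt_dl Exy j lt_jd //.
pose i := Ordinal lt_dl.
have {}Exy : path_vertex x i.+1 = path_vertex y i.+1 by [].
have Efather : path_vertex x i = path_vertex y i.
  by have := path_vertex_father y i; rewrite -Exy path_vertex_father => -[].
have [_ G_inj _] := G_sons (i := i) (path_vertex_depth x (ltnW lt_dl)).
have Ei : x i = y i.
  by apply: G_inj; move: Exy; rewrite !path_vertexS -Efather.
rewrite ltnS leq_eqVlt in lt_jd; case/orP: lt_jd => [/eqP Ej | lt_jd].
  by rewrite (_ : j = i) //; apply: val_inj.
exact: IH (ltnW lt_dl) Efather j lt_jd.
Qed.

Lemma path_vertex_onto (x0 : point X) v : exists x d, d <= l /\ v = path_vertex x d.
Proof.
have [n Hn] := pdepth_ex v.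
suff [le_nl [x ->]] : n <= l /\ exists x, v = path_vertex x n by exists x, n.
elim: n v Hn => [|n IH] v; first by rewrite /pdepth /= => -[->]; split => //; exists x0.
rewrite /pdepth iterSr /=; case Ev: (par v) => [w|]; last by rewrite iter_obind_None.
move=> Hw; have [le_nl [x Ew]] := IH w Hw.
have lt_nl : n < l.
  rewrite ltn_neqAle le_nl andbT; apply/eqP => Enl.
  by move: Hw; rewrite Enl => Hw; exact: (leaf_no_son Hw Ev).
split => //; pose i := Ordinal lt_nl.
have [_ _ G_onto] := G_sons (i := i) Hw.
have [a <-] := G_onto v Ev.
exists (dfwith x a); change (G i w a = path_vertex (dfwith x a) i.+1).
rewrite path_vertexS dfwith_in Ew; congr (G i _ a).
apply: path_vertex_prefix => j lt_jn; rewrite dfwith_out //.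
by apply/negP => /eqP Ej; rewrite -Ej ltnn in lt_jn.
Qed.

Variable x0 : point X.

Definition tree_map (phi : point X -> point X) (v : V) : V :=
  let p := epsilon (inhabits (x0, 0))
    (fun p : point X * nat => p.2 <= l /\ v = path_vertex p.1 p.2) in
  path_vertex (phi p.1) p.2.

(* For sequential phi the choice of address is irrelevant. *)
Lemma tree_map_path phi : sequential phi -> forall y d, d <= l ->
  tree_map phi (path_vertex y d) = path_vertex (phi y) d.
Proof.
move=> phi_seq y d le_dl; rewrite /tree_map.
have := epsilon_spec (inhabits (x0, 0))
  (fun p : point X * nat => p.2 <= l /\ path_vertex y d = path_vertex p.1 p.2)
  (ex_intro _ (y, d) (conj le_dl erefl)).
move: (epsilon _ _) => [x e] /= [le_el E].
have Ede : d = e.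
  by apply: (pdepth_uniq par_r0 (path_vertex_depth y le_dl)); rewrite E; apply: path_vertex_depth.
subst e; clear le_el.
have agree := path_vertex_inj le_dl E.
apply: path_vertex_prefix; case: d le_dl {E} agree => [|k] lt_kl agree j lt_jk //.
apply: (phi_seq (Ordinal lt_kl)) lt_jk => j' le_j'k.
exact/esym/agree.
Qed.

Lemma tree_map_id v : tree_map id v = v.
Proof.
have [x [d [le_dl ->]]] := path_vertex_onto x0 v.
by rewrite tree_map_path // => i a b.
Qed.

Lemma tree_map_comp phi psi : sequential phi -> sequential psi ->
  forall v, tree_map (psi \o phi) v = tree_map psi (tree_map phi v).
Proof.
move=> seq_phi seq_psi v; have [x [d [le_dl ->]]] := path_vertex_onto x0 v.
by rewrite !tree_map_path //; apply: sequential_comp.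
Qed.

(* phi is recovered from the images of the leaves. *)
Lemma tree_map_inj phi psi : sequential phi -> sequential psi ->
  (forall v, tree_map phi v = tree_map psi v) -> forall x, phi x = psi x.
Proof.
move=> seq_phi seq_psi E x; apply: functional_extensionality_dep => j.
have := E (path_vertex x l); rewrite !tree_map_path // => Eleaf.
exact: (path_vertex_inj (leqnn l) Eleaf).
Qed.

Lemma tree_map_depth phi : sequential phi -> forall v a,
  pdepth par r0 v a -> pdepth par r0 (tree_map phi v) a.
Proof.
move=> seq_phi v a Ha; have [x [d [le_dl Ev]]] := path_vertex_onto x0 v.
have Ed : d = a by apply: (pdepth_uniq par_r0 (path_vertex_depth x le_dl)); rewrite -Ev.
by rewrite Ev tree_map_path // -Ed; apply: path_vertex_depth.
Qed.

Lemma tree_map_father phi : sequential phi -> forall u w, par u = Some w ->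
  par (tree_map phi u) = Some (tree_map phi w).
Proof.
move=> seq_phi u w Euw.
have [x [d [le_dl Eu]]] := path_vertex_onto x0 u.
have [m Hm] := pdepth_ex w.
have Ed : d = m.+1.
  by apply: (pdepth_uniq par_r0 (path_vertex_depth x le_dl)); rewrite -Eu; exact: pdepth_son Euw Hm.
have lt_ml : m < l by rewrite -Ed.
pose i := Ordinal lt_ml.
have {}Eu : u = path_vertex x i.+1 by rewrite Eu Ed.
have Ew : w = path_vertex x i by move: Euw; rewrite Eu path_vertex_father => -[].
by rewrite Eu Ew !tree_map_path ?path_vertex_father // ltnW.
Qed.

Lemma tree_map_walk phi : sequential phi -> forall u v n, walk par u v n ->
  walk par (tree_map phi u) (tree_map phi v) n.
Proof.
move=> seq_phi u v n; elim => [z|u' w' v' k Hadj _ IH]; first by constructor.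
apply: (@walkS _ _ _ (tree_map phi w')) => //.
by case: Hadj => E; [left | right]; apply: tree_map_father.
Qed.

(* So tree_map phi is in Ell: distance to the root is the depth, and
   distances do not increase since walks are preserved. *)
Lemma tree_map_Ell phi : sequential phi -> in_Ell par r0 (tree_map phi).
Proof.
move=> seq_phi; split => [v n | u v n [m le_mn W]]; last first.
  by exists m => //; apply: tree_map_walk.
have [a Ha] := pdepth_ex v.
rewrite (dist_root_le par_r0 pdepth_ex _ Ha).
by rewrite (dist_root_le par_r0 pdepth_ex _ (tree_map_depth seq_phi Ha)).
Qed.

End TreeMap.

Theorem corollary3p5 (l : nat) (X : 'I_l -> Type)
    (M : forall i : 'I_l, (X i -> X i) -> Prop)
    (hl : 0 < l) (hX : forall i, inhabited (X i))
    (hM : forall i, is_tmonoid (M i))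
    (V : Type) (par : V -> option V) (r0 : V)
    (hT : is_T_tree par r0 X) :
  exists h : (point X -> point X) -> (V -> V),
    [/\ (forall phi, in_wreath M phi -> in_Ell par r0 (h phi)),
        (forall v, h id v = v),
        (forall phi psi, in_wreath M phi -> in_wreath M psi ->
           forall v, h (psi \o phi) v = h psi (h phi v))
      & (forall phi psi, in_wreath M phi -> in_wreath M psi ->
           (forall v, h phi v = h psi v) -> forall x, phi x = psi x)].
Proof.
have [G G_sons] := son_labelling_ex hT.
have [par_r0 pdepth_ex _ leaf_no_son] := hT.
pose x0 : point X := fun i => epsilon (hX i) (fun=> True).
exists (tree_map r0 G x0); split.
- by move=> phi [seq_phi _]; apply: tree_map_Ell.
- by move=> v; apply: (tree_map_id (par := par)).
- by move=> phi psi [seq_phi _] [seq_psi _]; apply: (tree_map_comp (par := par)).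
- by move=> phi psi [seq_phi _] [seq_psi _]; apply: (tree_map_inj (par := par)).
Qed.
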